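(* Let $N\ge 2$ and let $\mu_1,\dots,\mu_N$ be real numbers with $\mu_1\le 0<\mu_2<\mu_3<\cdots<\mu_N$. Let $\delta$ be a sufficiently small positive constant ($0<\delta\ll1$). Let $\pi_1$ satisfy $0<\pi_1\le\frac{\mu_N-\delta}{\mu_N-\mu_1}$. Let $f:\mathbb R^+\to\mathbb R^+$ be a differentiable function with $f'(\mu)\ge 0$ for all $\mu>0$, and let $f(\mu_1)$ denote an arbitrary given real constant. Consider the problem of minimizing $$\Phi(\pi_2,\dots,\pi_N)=\pi_1 f(\mu_1)+\sum_{j=2}^N\pi_j f(\mu_j)$$ over all $(\pi_2,\dots,\pi_N)$ satisfying $$\sum_{j=2}^N\pi_j\mu_j\ge-\pi_1\mu_1+\delta,\qquad \sum_{j=2}^N\pi_j=1-\pi_1,\qquad \pi_j\ge0\ (2\le j\le N).$$ Define $k^*$ as the index in $\{2,\dots,N\}$ with $$\mu_{k^*}=\min\Big\{\mu_k:\ \mu_k>\frac{-\pi_1\mu_1}{1-\pi_1},\ 2\le k\le N\Big\},$$ and for $2\le l<m\le N$ define $$F(\mu_l,\mu_m)=\pi_1 f(\mu_1)+\frac{f(\mu_m)-f(\mu_l)}{\mu_m-\mu_l}(\delta-\pi_1\mu_1)+\frac{\mu_m f(\mu_l)-\mu_l f(\mu_m)}{\mu_m-\mu_l}(1-\pi_1).$$ Then: (1) If $k^*=2$, the minimal value of $\Phi$ under the constraints is $\pi_1 f(\mu_1)+(1-\pi_1)f(\mu_2)$, attained by $\pi_2=1-\pi_1$ and $\pi_j=0$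 for $j\ge3$. (2) If $k^*>2$, the minimal value of $\Phi$ under the constraints is $$\min_{2\le l<k^*\le m\le N}F(\mu_l,\mu_m),$$ and, writing $(l^*,m^* )$ for a minimizing pair, it is attained by $\pi_j=0$ for $j\notin\{l^*,m^*\}$ and $$\begin{pmatrix}\pi_{l^*}\\ \pi_{m^*}\end{pmatrix}=\frac{1}{\mu_{m^*}-\mu_{l^*}}\begin{pmatrix}(\mu_{m^*}-\delta)+\pi_1(\mu_1-\mu_{m^*})\\ -(\mu_{l^*}-\delta)+\pi_1(\mu_{l^*}-\mu_1)\end{pmatrix}.$$
   Context: Interpretation (cyber epidemic model with a fixed attack-defense graph $G$ with adjacency matrix $A$): configurations are $\mathcal C_j=(G,\beta_j,\gamma_j)$ with cure probability $\beta_j$ and infection probability $\gamma_j$; $\lambda_1(A)$ is the eigenvalue of $A$ of largest modulus and $\mu_j=\beta_j-\gamma_j\lambda_1(A)$. $\mathcal C_1$ violates the epidemic-threshold condition $\mu>0$ and the system must stay in it for the portion of time $\pi_1$; $\mathcal C_2,\dots,\mathcal C_N$ are moving-target-defense-induced configurations satisfying $\mu_j>0$, with portions of time $\pi_j$. $f(\mu_j)$ is the cost of inducing $\mathcal C_j$, and the constraint $\sum_{j\ge2}\pi_j\mu_j\ge-\pi_1\mu_1+\delta$ is the (strictified) sufficient condition for the infection dying out. *)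

From HB Require Import structures.
From mathcomp Require Import all_boot all_order all_algebra.
From mathcomp Require Import all_classical all_reals all_analysis.
Set Implicit Arguments. Unset Strict Implicit. Unset Printing Implicit Defensive.
Import Order.TTheory GRing.Theory Num.Theory.
Local Open Scope ring_scope.

(* Indices: configurations are numbered 1..N; mu j is mu_j, pi j is pi_j.
   Only pi 2, ..., pi N are decision variables. *)

Definition feasible (R : realType) (N : nat) (mu : nat -> R) (pi1 delta : R)
  (pi : nat -> R) : Prop :=
  [/\ (forall j, (2 <= j <= N)%N -> 0 <= pi j),
      \sum_(2 <= j < N.+1) pi j = 1 - pi1
    & - (pi1 * mu 1%N) + delta <= \sum_(2 <= j < N.+1) pi j * mu j].

(* Objective Phi; f1 stands for the given constant f(mu_1). *)
Definition Phi (R : realType) (N : nat) (mu : nat -> R) (f : R -> R) (f1 pi1 : R)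
  (pi : nat -> R) : R :=
  pi1 * f1 + \sum_(2 <= j < N.+1) pi j * f (mu j).

Definition Fval (R : realType) (mu : nat -> R) (f : R -> R) (f1 pi1 delta : R)
  (l m : nat) : R :=
  pi1 * f1
  + (f (mu m) - f (mu l)) / (mu m - mu l) * (delta - pi1 * mu 1%N)
  + (mu m * f (mu l) - mu l * f (mu m)) / (mu m - mu l) * (1 - pi1).

Definition pi_pair (R : realType) (mu : nat -> R) (pi1 delta : R) (l m : nat)
  (j : nat) : R :=
  if j == l then ((mu m - delta) + pi1 * (mu 1%N - mu m)) / (mu m - mu l)
  else if j == m then (- (mu l - delta) + pi1 * (mu l - mu 1%N)) / (mu m - mu l)
  else 0.

Definition pi_single (R : realType) (pi1 : R) (j : nat) : R :=
  if j == 2%N then 1 - pi1 else 0.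

From HB Require Import structures.
From mathcomp Require Import all_boot all_order all_algebra.
From mathcomp Require Import all_classical all_reals all_analysis.
From mathcomp Require Import zify ring lra.
Set Implicit Arguments.
Unset Strict Implicit.
Import Order.TTheory GRing.Theory Num.Theory.
Local Open Scope ring_scope.

(* Weak duality for the linear program: if [A + C x] (with [C >= 0]) lies below
   [f] at every [mu_j], then [Phi] is at least [pi1 f(mu_1) + A (1 - pi1) +
   C (delta - pi1 mu_1)] on the feasible set.  For [k* = 2] the horizontal line
   at height [f(mu_2)] is such a minorant, since [f] is nondecreasing.  For
   [k* > 2] the secant of [f] through an optimal pair [(mu_l, mu_m)] is one:
   if some [mu_j] lay strictly below it, replacing [l] (if [j < k*]) or [m]
   (if [j >= k*]) by [j] would strictly decrease [F].  The pair distributions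
   attain these bounds; [delta] is taken so small that [delta - pi1 mu_1 < (1 -
   pi1) mu_j] exactly when [mu_j > -pi1 mu_1 / (1 - pi1)], which makes them
   feasible. *)

Lemma exists_seq_argmin {R : realDomainType} {T : eqType} (F : T -> R)
    (s : seq T) :
  s != [::] -> exists2 x, x \in s & forall y, y \in s -> F x <= F y.
Proof.
elim: s => [//|a s IHs] _.
have [-> | s_neq0] := eqVneq s [::].
  by exists a => [|y]; rewrite ?mem_seq1 // => /eqP ->.
have [x xs x_min] := IHs s_neq0.
have [Fa_le | Fx_lt] := lerP (F a) (F x).
  exists a => [|y]; first exact: mem_head.
  by rewrite inE => /predU1P[-> // | ys]; apply: le_trans Fa_le (x_min _ ys).
exists x => [|y]; first by rewrite inE xs orbT.
by rewrite inE => /predU1P[-> | ys]; [apply: ltW | apply: x_min].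
Qed.

Lemma exists_pos_lower_bound {R : realDomainType} {T : eqType} (P : pred T)
    (g : T -> R) (s : seq T) :
  (forall x, x \in s -> P x -> 0 < g x) ->
  exists2 d, 0 < d & forall x, x \in s -> P x -> d <= g x.
Proof.
elim: s => [|a s IHs] g_gt0; first by exists 1.
have [d d_gt0 d_le] : exists2 d, 0 < d & forall x, x \in s -> P x -> d <= g x.
  by apply: IHs => x xs; apply: g_gt0; rewrite inE xs orbT.
have [Pa | nPa] := boolP (P a); last first.
  exists d => // x; rewrite inE => /predU1P[-> /(negP nPa) // | xs]; exact: d_le.
have ga_gt0 : 0 < g a by apply: g_gt0; rewrite ?mem_head.
exists (Num.min d (g a)) => [|x]; first by rewrite lt_min d_gt0.
rewrite inE ge_min => /predU1P[-> _ | xs Px]; first by rewrite lexx orbT.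
by rewrite d_le.
Qed.

Lemma lt_from_succ {R : numDomainType} {a b : nat} {u : nat -> R} :
  (forall j, (a <= j < b)%N -> u j < u j.+1) ->
  forall j k, (a <= j)%N -> (j < k)%N -> (k <= b)%N -> u j < u k.
Proof.
move=> u_succ j k aj jk kb.
apply: (@homo_ltn_in R [pred i | a <= i <= b]%N u (fun x y => x < y)) => //.
- exact: lt_trans.
- by move=> x y; rewrite !inE => xD yD z xzy; rewrite inE; lia.
- by move=> i; rewrite !inE => /andP[ai _] /andP[_ ib]; apply: u_succ; lia.
- by rewrite inE aj; lia.
- by rewrite inE kb; lia.
Qed.

Lemma le_from_succ {R : numDomainType} {a b : nat} {u : nat -> R} :
  (forall j, (a <= j < b)%N -> u j < u j.+1) ->
  forall j k, (a <= j)%N -> (j <= k)%N -> (k <= b)%N -> u j <= u k.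
Proof.
move=> u_succ j k aj jk kb; have [-> // | j_neq_k] := eqVneq j k.
by rewrite ltW // (lt_from_succ u_succ) // ltn_neqAle j_neq_k.
Qed.

Lemma derive1_ge0_le_pos {R : realType} {f : R -> R} :
  (forall x, 0 < x -> derivable f x 1) ->
  (forall x, 0 < x -> 0 <= derive1 f x) ->
  forall x y, 0 < x -> x <= y -> f x <= f y.
Proof.
move=> f_der f'_ge0 x y x_gt0 xy.
apply: (@ger0_derive1_ndecr R f x y) => // [z|z|]; rewrite ?in_itv /=.
- by case/andP=> xz _; apply: f_der; apply: lt_trans xz.
- by case/andP=> xz _; apply: f'_ge0; apply: lt_trans xz.
- apply: derivable_within_continuous => z; rewrite in_itv /= => /andP[xz _].
  by apply: f_der; apply: lt_le_trans xz.
Qed.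

Lemma exists_uniform_gap {R : realDomainType} (N : nat) (mu : nat -> R) (c : R) {S : R} :
  0 < S -> exists2 d, 0 < d & forall delta, delta < d ->
    forall k, (2 <= k <= N)%N -> c < mu k -> c * S + delta < S * mu k.
Proof.
move=> S_gt0; have [d d_gt0 d_le] : exists2 d, 0 < d &
    forall k, k \in iota 2 N.-1 -> c < mu k -> d <= (mu k - c) * S.
  by apply: exists_pos_lower_bound => k _ c_lt; rewrite mulr_gt0 ?subr_gt0.
exists d => // delta delta_lt k k_range c_lt.
have := d_le k; rewrite mem_iota => /(_ ltac:(lia) c_lt).
by rewrite mulrBl mulrC; lra.
Qed.

Section Secant.
Context {R : realFieldType} (B S : R).

Definition secant_slope (x fx y fy : R) := (fy - fx) / (y - x).
Definition secant_icept (x fx y fy : R) := (y * fx - x * fy) / (y - x).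

(* Cost of the distribution of mass [S] and first moment [B] on [{x, y}]. *)
Definition pair_cost (x fx y fy : R) :=
  secant_slope x fx y fy * B + secant_icept x fx y fy * S.

(* Moving the left point from [x] to [z] changes the cost by the height of
   [(z, fz)] above the secant through [(x, fx)], [(y, fy)], times a positive
   factor. *)
Lemma secant_le_of_pair_cost_le_left x fx y fy z fz :
  x < y -> z < y -> B < y * S ->
  pair_cost x fx y fy <= pair_cost z fz y fy ->
  secant_icept x fx y fy + secant_slope x fx y fy * z <= fz.
Proof.
move=> xy zy BS; set line := _ + _ * z.
have -> : pair_cost z fz y fy
    = pair_cost x fx y fy + (fz - line) * ((y * S - B) / (y - z)).
  rewrite /pair_cost /line /secant_slope /secant_icept; field.
  by rewrite !subr_eq0 !gt_eqF.
by rewrite lerDl pmulr_lge0 ?subr_ge0 // divr_gt0 // subr_gt0 // mulrC.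
Qed.

Lemma secant_le_of_pair_cost_le_right x fx y fy z fz :
  x < y -> x < z -> x * S < B ->
  pair_cost x fx y fy <= pair_cost x fx z fz ->
  secant_icept x fx y fy + secant_slope x fx y fy * z <= fz.
Proof.
move=> xy xz SB; set line := _ + _ * z.
have -> : pair_cost x fx z fz
    = pair_cost x fx y fy + (fz - line) * ((B - x * S) / (z - x)).
  rewrite /pair_cost /line /secant_slope /secant_icept; field.
  by rewrite !subr_eq0 !gt_eqF.
by rewrite lerDl pmulr_lge0 ?subr_ge0 // divr_gt0 // subr_gt0.
Qed.

End Secant.

Section TwoPointLP.
Variables (R : realType) (N : nat) (mu : nat -> R) (f : R -> R) (f1 pi1 : R).
Variable delta : R.

Local Notation S := (1 - pi1).
Local Notation B := (delta - pi1 * mu 1%N).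
Local Notation feasible := (feasible N mu pi1 delta).
Local Notation Phi := (Phi N mu f f1 pi1).
Local Notation Fval := (Fval mu f f1 pi1 delta).

Lemma Phi_ge_affine_minorant {A C : R} {p : nat -> R} :
  feasible p -> 0 <= C ->
  (forall j, (2 <= j <= N)%N -> A + C * mu j <= f (mu j)) ->
  pi1 * f1 + A * S + C * B <= Phi p.
Proof.
move=> [p_ge0 p_sum p_mom] C_ge0 minorant; rewrite /Phi -addrA lerD2l.
apply: (@le_trans _ _ (\sum_(2 <= j < N.+1) p j * (A + C * mu j))).
  have -> : \sum_(2 <= j < N.+1) p j * (A + C * mu j)
      = A * \sum_(2 <= j < N.+1) p j + C * \sum_(2 <= j < N.+1) p j * mu j.
    by rewrite !mulr_sumr -big_split; apply: eq_bigr => j _ /=; ring.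
  by rewrite p_sum [B]addrC lerD2l ler_wpM2l.
apply: ler_sum_nat => j /andP[j2 jN]; apply: ler_wpM2l; first by apply: p_ge0; lia.
by apply: minorant; lia.
Qed.

Lemma sum_pi_single (G : nat -> R) : (2 <= N)%N ->
  \sum_(2 <= j < N.+1) pi_single pi1 j * G j = S * G 2%N.
Proof.
move=> N2; under eq_bigr do rewrite /pi_single (fun_if (fun x => x * G _)) mul0r.
by rewrite -big_mkcond big_nat1_eq /= ltnS N2.
Qed.

Lemma feasible_pi_single :
  (2 <= N)%N -> pi1 <= 1 -> B <= S * mu 2%N -> feasible (pi_single pi1).
Proof.
move=> N2 pi1_le1 B_le; split.
- by move=> j _; rewrite /pi_single; case: ifP; rewrite ?subr_ge0.
- by rewrite -[RHS]mulr1 -(sum_pi_single (fun=> 1)) //; apply: eq_bigr => j _; rewrite mulr1.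
- by rewrite sum_pi_single // addrC.
Qed.

Lemma Phi_pi_single : (2 <= N)%N ->
  Phi (pi_single pi1) = pi1 * f1 + S * f (mu 2%N).
Proof. by move=> N2; rewrite /Phi sum_pi_single. Qed.

Hypothesis mu_lt : forall j k, (2 <= j)%N -> (j < k)%N -> (k <= N)%N -> mu j < mu k.
Hypothesis f_mu_le :
  forall j k, (2 <= j)%N -> (j <= k)%N -> (k <= N)%N -> f (mu j) <= f (mu k).

Lemma Phi_pi_single_le pi :
  feasible pi -> pi1 * f1 + S * f (mu 2%N) <= Phi pi.
Proof.
move=> feas; rewrite [S * _]mulrC -[X in X <= _]addr0 -(mul0r B).
apply: Phi_ge_affine_minorant feas (lexx 0) _ => j /andP[j2 jN].
by rewrite mul0r addr0; apply: f_mu_le.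
Qed.

Lemma Fval_pair_cost l m : Fval l m
  = pi1 * f1 + pair_cost B S (mu l) (f (mu l)) (mu m) (f (mu m)).
Proof. by rewrite /Fval addrA. Qed.

Section Pair.
Variables l m : nat.
Hypotheses (l_ge2 : (2 <= l)%N) (lm : (l < m)%N) (m_leN : (m <= N)%N).

Let mu_lm : mu l < mu m. Proof. exact: mu_lt. Qed.

Lemma pi_pairE j : pi_pair mu pi1 delta l m j
  = if j == l then (S * mu m - B) / (mu m - mu l)
    else if j == m then (B - S * mu l) / (mu m - mu l) else 0.
Proof.
rewrite /pi_pair.
have -> : mu m - delta + pi1 * (mu 1%N - mu m) = S * mu m - B by ring.
by have -> : - (mu l - delta) + pi1 * (mu l - mu 1%N) = B - S * mu l by ring.
Qed.

Lemma sum_pi_pair (G : nat -> R) :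
  \sum_(2 <= j < N.+1) pi_pair mu pi1 delta l m j * G j
  = ((S * mu m - B) * G l + (B - S * mu l) * G m) / (mu m - mu l).
Proof.
pose wl := (S * mu m - B) / (mu m - mu l).
pose wm := (B - S * mu l) / (mu m - mu l).
have split_pair j : pi_pair mu pi1 delta l m j * G j
    = (if j == l then wl * G j else 0) + (if j == m then wm * G j else 0).
  rewrite pi_pairE; have [-> | _] := eqVneq j l; first by rewrite ltn_eqF // addr0.
  by case: eqP; rewrite ?add0r ?mul0r.
rewrite (eq_bigr _ (fun j _ => split_pair j)) big_split -!big_mkcond !big_nat1_eq /=.
have [-> ->] : (2 <= l < N.+1)%N /\ (2 <= m < N.+1)%N by clear -l_ge2 lm m_leN; lia.
by rewrite /wl /wm; field; rewrite subr_eq0 gt_eqF.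
Qed.

Lemma feasible_pi_pair :
  S * mu l <= B -> B <= S * mu m -> feasible (pi_pair mu pi1 delta l m).
Proof.
move=> SlB BSm; have dmu_gt0 : 0 < mu m - mu l by rewrite subr_gt0.
split.
- move=> j _; rewrite pi_pairE.
  by case: ifP => _; [|case: ifP => _ //]; apply: divr_ge0; rewrite subr_ge0 // ltW.
- rewrite -(eq_bigr _ (fun j _ => mulr1 (pi_pair mu pi1 delta l m j))) sum_pi_pair.
  by field; rewrite gt_eqF.
- rewrite sum_pi_pair addrC le_eqVlt; apply/orP; left; apply/eqP.
  by field; rewrite gt_eqF.
Qed.

Lemma Phi_pi_pair : Phi (pi_pair mu pi1 delta l m) = Fval l m.
Proof.
rewrite /Phi sum_pi_pair /Fval; field.
by rewrite subr_eq0 gt_eqF.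
Qed.

End Pair.

Lemma Fval_le_Phi k l m pi :
  (2 <= l)%N -> (l < k)%N -> (k <= m)%N -> (m <= N)%N ->
  S * mu l < B -> B < S * mu m ->
  (forall l' m', (2 <= l')%N -> (l' < k)%N -> (k <= m')%N -> (m' <= N)%N ->
     Fval l m <= Fval l' m') ->
  feasible pi -> Fval l m <= Phi pi.
Proof.
move=> l2 lk km mN SlB BSm Fmin feas.
have lm : (l < m)%N by lia.
have cost_min l' m' : (2 <= l')%N -> (l' < k)%N -> (k <= m')%N -> (m' <= N)%N ->
    pair_cost B S (mu l) (f (mu l)) (mu m) (f (mu m))
    <= pair_cost B S (mu l') (f (mu l')) (mu m') (f (mu m')).
  by move=> *; rewrite -(lerD2l (pi1 * f1)) -!Fval_pair_cost; apply: Fmin.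
have slope_ge0 : 0 <= secant_slope (mu l) (f (mu l)) (mu m) (f (mu m)).
  by apply: divr_ge0; rewrite subr_ge0 ?f_mu_le ?ltW ?mu_lt //; lia.
rewrite Fval_pair_cost /pair_cost (addrC (secant_slope _ _ _ _ * B)) addrA.
apply: Phi_ge_affine_minorant feas slope_ge0 _ => j /andP[j2 jN].
have [jk | kj] := ltnP j k.
- apply: secant_le_of_pair_cost_le_left (cost_min j m j2 jk km mN).
  + exact: mu_lt.
  + by apply: mu_lt; lia.
  + by rewrite [mu _ * _]mulrC.
- apply: secant_le_of_pair_cost_le_right (cost_min l j l2 lk kj jN).
  + exact: mu_lt.
  + by apply: mu_lt; lia.
  + by rewrite [mu _ * _]mulrC.
Qed.

Lemma exists_Fval_argmin k : (2 < k <= N)%N ->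
  exists l m, [/\ (2 <= l)%N, (l < k)%N, (k <= m)%N, (m <= N)%N &
    forall l' m', (2 <= l')%N -> (l' < k)%N -> (k <= m')%N -> (m' <= N)%N ->
      Fval l m <= Fval l' m'].
Proof.
move=> k_range.
pose pairs := [seq (l, m) | l <- iota 2 (k - 2), m <- iota k (N.+1 - k)].
have mem_pairs l m : ((l, m) \in pairs) = [&& 2 <= l, l < k, k <= m & m <= N]%N.
  apply/allpairsP/and4P => [[[l' m'] /= [+ + [-> ->]]] | [l2 lk km mN]].
    by rewrite !mem_iota => l_in m_in; split; lia.
  by exists (l, m); rewrite /= !mem_iota; split => //; lia.
have pair_in : (2%N, k) \in pairs by rewrite mem_pairs leqnn /=; lia.
have : pairs != [::] by apply/eqP => pairs0; rewrite pairs0 in pair_in.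
case/(exists_seq_argmin (fun p => Fval p.1 p.2)) => -[l m].
rewrite mem_pairs => /and4P[l2 lk km mN] lm_min.
exists l, m; split => // l' m' l2' lk' km' mN'.
by apply: (lm_min (l', m')); rewrite mem_pairs l2' lk' km'.
Qed.

End TwoPointLP.

Theorem theorem3 (R : realType) (N : nat) (mu : nat -> R) (f : R -> R) (f1 : R) :
  (2 <= N)%N ->
  mu 1%N <= 0 -> 0 < mu 2%N ->
  (forall j, (2 <= j < N)%N -> mu j < mu j.+1) ->
  (forall x : R, 0 < x -> 0 < f x) ->
  (forall x : R, 0 < x -> derivable f x 1) ->
  (forall x : R, 0 < x -> 0 <= derive1 f x) ->
  forall pi1 : R, 0 < pi1 ->
  exists delta0 : R, 0 < delta0 /\
  forall delta : R, 0 < delta -> delta < delta0 ->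
  pi1 <= (mu N - delta) / (mu N - mu 1%N) ->
  forall kstar : nat, (2 <= kstar <= N)%N ->
    - (pi1 * mu 1%N) / (1 - pi1) < mu kstar ->
    (forall k, (2 <= k <= N)%N -> - (pi1 * mu 1%N) / (1 - pi1) < mu k ->
       mu kstar <= mu k) ->
  (* case (1) *)
  (kstar = 2%N ->
     feasible N mu pi1 delta (pi_single pi1) /\
     Phi N mu f f1 pi1 (pi_single pi1) = pi1 * f1 + (1 - pi1) * f (mu 2%N) /\
     (forall pi, feasible N mu pi1 delta pi ->
        pi1 * f1 + (1 - pi1) * f (mu 2%N) <= Phi N mu f f1 pi1 pi)) /\
  (* case (2) *)
  ((2 < kstar)%N ->
     (exists l m, [/\ (2 <= l)%N, (l < kstar)%N, (kstar <= m)%N, (m <= N)%N &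
        forall l' m', (2 <= l')%N -> (l' < kstar)%N -> (kstar <= m')%N -> (m' <= N)%N ->
          Fval mu f f1 pi1 delta l m <= Fval mu f f1 pi1 delta l' m']) /\
     (forall l m, (2 <= l)%N -> (l < kstar)%N -> (kstar <= m)%N -> (m <= N)%N ->
        (forall l' m', (2 <= l')%N -> (l' < kstar)%N -> (kstar <= m')%N -> (m' <= N)%N ->
          Fval mu f f1 pi1 delta l m <= Fval mu f f1 pi1 delta l' m') ->
        feasible N mu pi1 delta (pi_pair mu pi1 delta l m) /\
        Phi N mu f f1 pi1 (pi_pair mu pi1 delta l m) = Fval mu f f1 pi1 delta l m /\
        (forall pi, feasible N mu pi1 delta pi ->
           Fval mu f f1 pi1 delta l m <= Phi N mu f f1 pi1 pi))).
Proof.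
move=> N2 mu1_le0 mu2_gt0 mu_succ _ f_der f'_ge0 pi1 pi1_gt0.
have mu_lt := lt_from_succ mu_succ.
have mu_le := le_from_succ mu_succ.
have f_mu_le j k : (2 <= j)%N -> (j <= k)%N -> (k <= N)%N -> f (mu j) <= f (mu k).
  move=> j2 jk kN; apply: derive1_ge0_le_pos => //; last exact: mu_le.
  by apply: (lt_le_trans mu2_gt0); apply: mu_le => //; lia.
have [pi1_ge1 | pi1_lt1] := leP 1 pi1.
  exists 1; split => // delta delta_gt0 _; have muN_gt0 : 0 < mu N.
    by apply: (lt_le_trans mu2_gt0); apply: mu_le.
  by rewrite ler_pdivlMr ?subr_gt0 ?(le_lt_trans mu1_le0) //; nra.
have S_gt0 : 0 < 1 - pi1 by rewrite subr_gt0.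
pose c := - (pi1 * mu 1%N) / (1 - pi1).
have cS : c * (1 - pi1) = - (pi1 * mu 1%N) by rewrite divfK ?gt_eqF.
have [d d_gt0 gap] := exists_uniform_gap N mu c S_gt0.
exists d; split => // delta delta_gt0 delta_lt_d _ k k_range c_lt_k k_min.
have below j : (2 <= j)%N -> (j < k)%N -> (1 - pi1) * mu j < delta - pi1 * mu 1%N.
  move=> j2 jk; have mu_j_le_c : mu j <= c.
    by rewrite leNgt; apply/negP => /(k_min j) /=; rewrite leNgt mu_lt //; lia.
  by rewrite mulrC (le_lt_trans (ler_wpM2r (ltW S_gt0) mu_j_le_c)) // cS; lra.
have above m : (k <= m <= N)%N -> delta - pi1 * mu 1%N < (1 - pi1) * mu m.
  move=> km; rewrite -cS addrC; apply: gap => //; first lia.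
  by apply: (lt_le_trans c_lt_k); apply: mu_le; lia.
split=> [k2 | k_gt2].
  subst k; have B_lt_mu2 := above 2%N k_range.
  split; first exact: feasible_pi_single N2 (ltW pi1_lt1) (ltW B_lt_mu2).
  by split; [apply: Phi_pi_single | apply: Phi_pi_single_le].
split; first by apply: exists_Fval_argmin; lia.
move=> l m l2 lk km mN lm_min; have lm : (l < m)%N by lia.
have B_gt_mul := below l l2 lk.
have B_lt_mum : delta - pi1 * mu 1%N < (1 - pi1) * mu m by apply: above; lia.
split; first by apply: (feasible_pi_pair mu_lt l2 lm mN); apply: ltW.
split; first exact: Phi_pi_pair.
by move=> pi; apply: (Fval_le_Phi mu_lt f_mu_le l2 lk km mN B_gt_mul B_lt_mum lm_min).
Qed.
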